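(* Let $(\sigma_k)_{k>0}$ be real numbers with $\sigma_k/\ln(k)\to\infty$ as $k\to\infty$, and let $\gamma>0$. Then $$\lim_{k\to\infty}k\int_{\sigma_k}^\infty\exp\Bigl(-2m\Bigl(\gamma-\sqrt{\tfrac{\ln(k)}{m}}\Bigr)^2\Bigr)\,\mathrm dm=0.$$ *)

From HB Require Import structures.
From mathcomp Require Import all_boot all_order all_algebra.
From mathcomp Require Import all_classical all_reals all_analysis.

From HB Require Import structures.
From mathcomp Require Import all_boot all_order all_algebra.
From mathcomp Require Import all_classical all_reals all_analysis.
From mathcomp Require Import lra.
Import Order.TTheory GRing.Theory Num.Theory.
Import numFieldTopology.Exports.
Local Open Scope classical_set_scope.
Local Open Scope ring_scope.

(* Once [m >= sigma_k >= 4 ln k / gamma^2] we have [sqrt (ln k / m) <= gamma / 2],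
   so the integrand is at most [exp (- gamma^2 m / 2)].  The tail integral of this
   exponential is [2 exp (- gamma^2 sigma_k / 2) / gamma^2 <= 2 / (gamma^2 k^2)],
   hence [k] times the integral is [O(1/k)]. *)

Lemma ge0_le_integral_nonmeasurable d (T : measurableType d) (R : realType)
    (mu : {measure set T -> \bar R}) (D : set T) (f g : T -> \bar R) :
  (forall x, D x -> (0 <= f x)%E) -> (forall x, D x -> (f x <= g x)%E) ->
  (\int[mu]_(x in D) f x <= \int[mu]_(x in D) g x)%E.
Proof.
move=> f_ge0 fg.
have g_ge0 x : D x -> (0 <= g x)%E by move=> Dx; exact: le_trans (f_ge0 x Dx) (fg x Dx).
rewrite (ge0_integralE _ f_ge0) (ge0_integralE _ g_ge0).
apply: ereal_sup_le => _ [h hf <-]; exists h => // x.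
apply: le_trans (hf x) _.
by rewrite /patch; case: ifPn => // /set_mem; exact: fg.
Qed.

Lemma sqr_subr_sqrt_ge (R : rcfType) (g x : R) : 0 <= g -> 0 <= x -> 4 * x <= g ^+ 2 ->
  g ^+ 2 / 4 <= (g - Num.sqrt x) ^+ 2.
Proof.
move=> g_ge0 x_ge0 xg.
have s_ge0 := sqrtr_ge0 x.
have sx : Num.sqrt x ^+ 2 = x by rewrite sqr_sqrtr.
have s_le : Num.sqrt x <= g / 2 by nra.
nra.
Qed.

Section gaussian_tail.
Variable R : realType.
Notation mu := (@lebesgue_measure R).

Lemma integral_itvcy_expRNM (c a : R) : 0 < c ->
  (\int[mu]_(x in `[a, +oo[) (expR (- (c * x)))%:E = (expR (- (c * a)) / c)%:E)%E.
Proof.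
move=> c_gt0.
have cont_exp : continuous (fun x : R => expR (- (c * x))).
  move=> x; apply: continuous_comp; last exact: continuous_expR.
  by apply: (@continuousN _ R^o); apply: continuousM => //; exact: cst_continuous.
pose F x : R := - expR (- (c * x)) / c.
have cont_F : continuous F.
  move=> x; apply: (@continuousM _ R^o (fun x => - expR (- (c * x))) (fun=> c^-1)).
    by apply: (@continuousN _ R^o); exact: cont_exp.
  exact: cst_continuous.
rewrite (@ge0_continuous_FTC2y _ _ F a 0).
- by rewrite -EFinB sub0r /F mulNr opprK.
- by move=> x _; exact: expR_ge0.
- exact: continuous_subspaceT.
- rewrite -[0](mul0r c^-1) -oppr0; apply: cvgMr_tmp; apply: cvgN.
  apply: (cvg_comp (fun x => c * x) (fun x => expR (- x)) (G := pinfty_nbhs R)).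
    exact: gt0_cvgMry.
  exact: cvgr_expR.
- by move=> x _; exact: ex_derive.
- by apply/cvg_at_right_filter; exact: cont_F.
- move=> x _; rewrite derive1E derive_val scaler0 add0r mulrN opprK.
  by rewrite /GRing.scale /= mulr1 mulrCA mulVf ?gt_eqF// mulr1.
Qed.

Lemma expR_gap_le (g L m : R) : 0 < g -> 0 <= L -> 0 < m -> 4 * L <= g ^+ 2 * m ->
  expR (- (2 * m * (g - Num.sqrt (L / m)) ^+ 2)) <= expR (- (g ^+ 2 / 2 * m)).
Proof.
move=> g_gt0 L_ge0 m_gt0 Lm.
have gap : g ^+ 2 / 4 <= (g - Num.sqrt (L / m)) ^+ 2.
  apply: sqr_subr_sqrt_ge; first exact: ltW.
    by rewrite divr_ge0// ltW.
  by rewrite mulrA ler_pdivrMr// mulrC.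
rewrite ler_expR lerN2; nra.
Qed.

Lemma mulr_expRN_le_inv (x t : R) : 0 < x -> 2 * ln x <= t -> x * expR (- t) <= x^-1.
Proof.
move=> x_gt0 lnx_t.
have xE : x = expR (ln x) by rewrite lnK.
by rewrite {1}xE -expRD {2}xE -expRN ler_expR; lra.
Qed.

Lemma mulr_integral_gap_le (g s x : R) : 0 < g -> 1 < x -> 4 * ln x <= g ^+ 2 * s ->
  (x%:E * \int[mu]_(m in `[s, +oo[) (expR (- (2 * m * (g - Num.sqrt (ln x / m)) ^+ 2)))%:E
    <= ((g ^+ 2 / 2)^-1 * x^-1)%:E)%E.
Proof.
move=> g_gt0 x_gt1 lnx_s.
set c := g ^+ 2 / 2.
have g2_gt0 : 0 < g ^+ 2 by exact: exprn_gt0.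
have c_gt0 : 0 < c by rewrite divr_gt0.
have x_gt0 : 0 < x by exact: lt_trans x_gt1.
have lnx_gt0 : 0 < ln x by exact: ln_gt0.
have s_gt0 : 0 < s by rewrite -(pmulr_rgt0 _ g2_gt0); apply: lt_le_trans lnx_s; lra.
apply: (@le_trans _ _ (x%:E * (expR (- (c * s)) / c)%:E)%E).
  apply: lee_wpmul2l; first by rewrite lee_fin ltW.
  rewrite -integral_itvcy_expRNM//.
  apply: ge0_le_integral_nonmeasurable => m; first by rewrite lee_fin expR_ge0.
  rewrite /= in_itv /= andbT => s_le_m.
  rewrite lee_fin; apply: expR_gap_le => //.
  - exact: ltW.
  - exact: lt_le_trans s_le_m.
  - by apply: le_trans lnx_s _; rewrite ler_wpM2l// ltW.
rewrite -EFinM lee_fin mulrA mulrC; apply: ler_wpM2l; first by rewrite invr_ge0 ltW.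
by apply: mulr_expRN_le_inv => //; rewrite /c; lra.
Qed.

End gaussian_tail.

Theorem lemmaC4 (R : realType) (sigma : nat -> R) (gamma : R)
  (hsigma : (fun k : nat => sigma k / ln (k%:R : R)) @ \oo --> +oo)
  (hgamma : 0 < gamma) :
  (fun k : nat => ((k%:R : R)%:E *
     \int[@lebesgue_measure R]_(m in `[sigma k, +oo[)
        (expR (- (2 * m * (gamma - Num.sqrt (ln (k%:R : R) / m)) ^+ 2)))%:E)%E)
  @ \oo --> 0%E.
Proof.
have g2_gt0 : 0 < gamma ^+ 2 by exact: exprn_gt0.
apply: (@squeeze_cvge _ _ _ _ (fun=> 0%E) _
  (fun k => ((gamma ^+ 2 / 2)^-1 * (k%:R : R)^-1)%:E)); last 2 first.
- exact: cvg_cst.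
- apply: cvg_EFin; first exact: nearW.
  rewrite -[0](mulr0 (gamma ^+ 2 / 2)^-1); apply: cvgMl_tmp.
  by rewrite gtr0_cvgV0; [exact: cvgr_idn | near do rewrite ltr0n].
have /cvgryPge sigma_large := hsigma.
near=> k.
have k_gt1 : 1 < (k%:R : R) by rewrite ltr1n; near: k; exists 2%N.
have lnk_gt0 : 0 < ln (k%:R : R) by exact: ln_gt0.
have sigma_k : 4 * ln (k%:R : R) <= gamma ^+ 2 * sigma k.
  have : 4 / gamma ^+ 2 <= sigma k / ln (k%:R : R) by near: k; exact: sigma_large.
  by rewrite ler_pdivrMr// mulrAC ler_pdivlMr// [sigma k * _]mulrC.
apply/andP; split; last exact: mulr_integral_gap_le.
rewrite mule_ge0 ?lee_fin//.
by apply: integral_ge0 => m _; rewrite lee_fin expR_ge0.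
Unshelve. all: by end_near.
Qed.
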